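(* Consider the constrained decoding algorithm below, run with a language model $\mathsf{lm}$ and an AST predicate $\varphi$, using a function $\mathsf{realizable}$ that is both over-approximate and consistent, and with a worklist implementing fair enumeration (every string that has been enqueued is eventually dequeued). Then constrained decoding is complete: if there exists a string $\omega^*\in\Sigma^*$ with $\varphi(\mathsf{parse}(\omega^* ))$, the algorithm returns a solution (a string $\omega$ with $\varphi(\mathsf{parse}(\omega))$).
   Context: Let $\Sigma$ be a finite alphabet, $\mathsf{AST}$ a set of abstract syntax trees, and $\mathsf{parse}\colon \Sigma^*\to\mathsf{AST}\cup\{\bot\}$ a parsing function. A semantic constraint is a predicate $\varphi\colon\mathsf{AST}\to\mathrm{bool}$ (taken false on $\bot$). A token vocabulary $\mathcal{T}$ is a set of finite strings over $\Sigma$ such that every string in $\Sigma^*$ is a concatenation of tokens; it contains a distinguished one-character token $\mathsf{END}$. Token sequences are identified with the strings they concatenate to. It is assumed that every string satisfying the constraint contains $\mathsf{END}$ exactly once, as its last character. A language model is a function $\mathsf{lm}\colon\mathcal{T}^*\to\mathcal{T}\to[0,1]$. Constrained decoding algorithm: initialize a worklist (an abstract queue data structure with operations enqueue/dequeue) to contain only the empty string $\epsilon$. While the worklist is nonempty: dequeue a string $\omega$; for each $\tau\in\mathcal{T}$, if $\mathsf{realizable}(\omega\tau,\varphi)$ holds then, if $\tau=\mathsf{END}$, return $\omega\tau$; otherwise enqueue $\omega\tau$ with priority $\mathsf{lm}(\omega,\tau)$. If the worklist becomes empty, return $\bot$. A realizability checker is over-approximate if $\big(\exists\omega'\in\Sigma^*.\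 \varphi(\mathsf{parse}(\omega\omega'))\big)\Rightarrow\mathsf{realizable}(\omega,\varphi)$ for all $\omega$; it is consistent if for every $\omega$ whose last character is $\mathsf{END}$, $\mathsf{realizable}(\omega,\varphi)\Leftrightarrow\varphi(\mathsf{parse}(\omega))$. *)

From mathcomp Require Import all_boot all_order all_algebra.
Set Implicit Arguments. Unset Strict Implicit. Unset Printing Implicit Defensive.
Import Order.TTheory GRing.Theory Num.Theory.

Section Decoding.
Variables (Sigma : finType) (AST : Type).

Definition sem (parse : seq Sigma -> option AST) (phi : AST -> bool)
  (w : seq Sigma) : bool :=
  if parse w is Some a then phi a else false.

(* The state of the algorithm: either still looping with the current worklist
   contents (string, priority) -- the worklist is an abstract multiset whose
   dequeue operation may remove any element -- or finished with a result
   (Some w = returned w, None = returned bottom). *)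
Variable R : realFieldType.
Inductive dstate :=
  | Running of seq (seq Sigma * R)
  | Done of option (seq Sigma).

Variables (voc : seq (seq Sigma)) (endc : Sigma)
  (real : seq Sigma -> bool) (lm : seq Sigma -> seq Sigma -> R).

Fixpoint process (w : seq Sigma) (ts : seq (seq Sigma)) (acc : seq (seq Sigma * R))
  : dstate :=
  match ts with
  | [::] => Running acc
  | t :: ts' =>
      if real (w ++ t) then
        if t == [:: endc] then Done (Some (w ++ t))
        else process w ts' (rcons acc (w ++ t, lm w t))
      else process w ts' acc
  end.

(* One iteration of the while loop; [d] records the dequeued string. *)
Inductive dstep : dstate -> option (seq Sigma) -> dstate -> Prop :=
  | dstep_empty : dstep (Running [::]) None (Done None)
  | dstep_deq (p : seq (seq Sigma * R)) (i : nat) (x : seq Sigma * R) :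
      i < size p -> x = nth x p i ->
      dstep (Running p) (Some x.1)
            (process x.1 voc (take i p ++ drop i.+1 p))
  | dstep_done (r : option (seq Sigma)) : dstep (Done r) None (Done r).

End Decoding.
Arguments Done {Sigma R}.
Arguments Running {Sigma R}.

From mathcomp Require Import all_boot all_order all_algebra.
Import Order.TTheory GRing.Theory Num.Theory.

Set Implicit Arguments.
Unset Strict Implicit.
Unset Printing Implicit Defensive.

(** Decompose a solution as [rcons (flatten ts) END] with tokens [ts].  By
    over-approximation every prefix [flatten (take k ts)] is realizable, so
    whenever that prefix is dequeued the next prefix is enqueued, and after
    the last one the token [END] passes the check and the loop returns.  The
    worklist always holds some prefix of the solution, hence never empties, and
    by fairness each prefix is dequeued in turn.  Anything returned ends in
    [END] and is realizable, so it is a solution by consistency. *)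

Lemma mem_take_drop_nth (T : eqType) (s : seq T) (x0 y : T) (i : nat) :
  i < size s -> y \in s -> y != nth x0 s i ->
  y \in take i s ++ drop i.+1 s.
Proof.
move=> lt_i_s; rewrite -{1}(cat_take_drop i s) (drop_nth x0 lt_i_s).
by rewrite !mem_cat in_cons => /or3P[-> | /eqP-> /eqP | ->] //; rewrite orbT.
Qed.

Section Decoding.
Variables (Sigma : finType) (R : realFieldType) (voc : seq (seq Sigma)).
Variables (endc : Sigma) (real : seq Sigma -> bool).
Variable lm : seq Sigma -> seq Sigma -> R.

Local Notation proc := (process endc real lm).
Local Notation step := (dstep voc endc real lm).

Definition accepted (r : option (seq Sigma)) : Prop :=
  exists w, r = Some (rcons w endc) /\ real (rcons w endc).

Lemma process_Done w ts acc r :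
  proc w ts acc = Done r -> r = Some (rcons w endc) /\ real (rcons w endc).
Proof.
elim: ts acc => //= t ts IH acc.
case: ifP => [real_wt | _]; last exact: IH.
case: eqP => [eq_t [<-] | _]; last exact: IH.
by rewrite -cats1 -eq_t.
Qed.

Lemma process_Running_sub w ts acc acc' :
  proc w ts acc = Running acc' -> {subset acc <= acc'}.
Proof.
elim: ts acc => [|t ts IH] acc /=; first by move=> [->].
case: ifP => _; last exact: IH.
case: eqP => // _ /IH sub_acc' x acc_x.
by apply: sub_acc'; rewrite mem_rcons in_cons acc_x orbT.
Qed.

Lemma process_Running_mem w ts acc acc' t :
  proc w ts acc = Running acc' -> t \in ts -> real (w ++ t) ->
  (t != [:: endc]) && (w ++ t \in map fst acc').
Proof.
elim: ts acc => //= t' ts IH acc.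
case: ifP => real_wt'; last first.
  by move=> /IH{}IH /predU1P[-> | /IH//]; rewrite real_wt'.
case: eqP => // ne_t' run_acc' /predU1P[-> _ | /(IH _ run_acc')//].
rewrite (introF eqP ne_t') /=; apply/mapP; exists (w ++ t', lm w t') => //.
by move/process_Running_sub: run_acc'; apply; rewrite mem_rcons mem_head.
Qed.

Lemma dstep_Some_process s w s' :
  step s (Some w) s' -> exists acc, s' = proc w voc acc.
Proof.
move Ed: (Some w) => d step_s; case: step_s Ed => // p i x _ _ [<-].
by exists (take i p ++ drop i.+1 p).
Qed.

Section SolutionPath.
Variable ts : seq (seq Sigma).
Hypotheses (ts_voc : all (mem voc) ts) (end_voc : [:: endc] \in voc).
Hypothesis real_prefix : forall k, real (flatten (take k ts)).
Hypothesis real_solution : real (rcons (flatten ts) endc).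

Local Notation pre k := (flatten (take k ts)).

Lemma process_prefix_Running k acc acc' :
  k <= size ts -> proc (pre k) voc acc = Running acc' ->
  k < size ts /\ pre k.+1 \in map fst acc'.
Proof.
move=> le_k_ts run_acc'; case: ltnP => [lt_k_ts | le_ts_k]; last first.
  have /anti_leq eq_k_ts : k <= size ts <= k by rewrite le_k_ts.
  have := process_Running_mem run_acc' end_voc.
  by rewrite cats1 eq_k_ts take_size real_solution eqxx => /(_ isT).
have pre_next : pre k.+1 = pre k ++ nth [::] ts k.
  by rewrite (take_nth [::] lt_k_ts) flatten_rcons.
have voc_tk : nth [::] ts k \in voc by apply: (allP ts_voc); rewrite mem_nth.
have := process_Running_mem run_acc' voc_tk.
by rewrite -pre_next real_prefix => /(_ isT)/andP[].
Qed.

Definition on_path (st : dstate Sigma R) : Prop :=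
  match st with
  | Running p => exists2 k, k <= size ts & pre k \in map fst p
  | Done r => accepted r
  end.

Lemma process_on_path w acc :
  (exists2 k, k <= size ts & pre k \in map fst acc) ->
  on_path (proc w voc acc).
Proof.
case E: (proc w voc acc) => [acc' | r] [k le_k_ts acc_k] /=.
  exists k => //; have /mapP[y /(process_Running_sub E) acc'_y ->] := acc_k.
  exact: map_f.
by have [-> ?] := process_Done E; exists w.
Qed.

Lemma dstep_on_path s d s' : step s d s' -> on_path s -> on_path s'.
Proof.
case=> [[k _ //] | p i x lt_i_p x_def [k le_k_ts p_k] | //].
have [x_k|ne_x_k] := eqVneq x.1 (pre k).
  rewrite x_k; case E: (proc _ voc _) => [acc' | r] /=.
    by have [lt_k_ts ?] := process_prefix_Running le_k_ts E; exists k.+1.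
  by have [-> ?] := process_Done E; exists (pre k).
apply: process_on_path; exists k => //.
rewrite map_cat map_take map_drop; apply: (mem_take_drop_nth (x0 := x.1)) => //.
  by rewrite size_map.
by rewrite (nth_map x) // -x_def eq_sym.
Qed.

Section Run.
Variables (run : nat -> dstate Sigma R) (deq : nat -> option (seq Sigma)).
Variable p0 : seq (seq Sigma * R).
Hypotheses (run0 : run 0 = Running p0) (p0_has_nil : [::] \in map fst p0).
Hypothesis run_step : forall n, step (run n) (deq n) (run n.+1).
Hypothesis run_fair : forall n p w, run n = Running p -> w \in map fst p ->
  exists m, (n <= m) /\ (deq m = Some w \/ exists r, run m = Done r).

Definition enqueued n w := exists2 p, run n = Running p & w \in map fst p.
Definition halts := exists n r, run n = Done r.

Lemma run_on_path n : on_path (run n).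
Proof.
elim: n => [|n IH]; last exact: dstep_on_path (run_step n) IH.
by rewrite run0; exists 0; rewrite ?take0.
Qed.

Lemma enqueued_prefix_next k n :
  k <= size ts -> enqueued n (pre k) ->
  halts \/ k < size ts /\ exists m, enqueued m (pre k.+1).
Proof.
move=> le_k_ts [p run_p p_k].
have [m [_ [deq_k | [r run_r]]]] := run_fair run_p p_k; last by left; exists m, r.
have := run_step m; rewrite deq_k => /dstep_Some_process[acc run_acc].
case E: (proc _ voc acc) run_acc => [acc' | r] run_acc; last by left; exists m.+1, r.
have [lt_k_ts acc'_k] := process_prefix_Running le_k_ts E.
by right; split=> //; exists m.+1, acc'.
Qed.

Lemma halts_or_enqueued_prefix k :
  k <= size ts -> halts \/ exists n, enqueued n (pre k).
Proof.
elim: k => [_ | k IH lt_k_ts]; first by right; exists 0, p0; rewrite ?take0.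
have [halted | [n enq_k]] := IH (ltnW lt_k_ts); first by left.
by have [|[_ ?]] := enqueued_prefix_next (ltnW lt_k_ts) enq_k; [left | right].
Qed.

Lemma run_halts : halts.
Proof.
have [//|[n enq_ts]] := halts_or_enqueued_prefix (leqnn (size ts)).
by have [//|[]] := enqueued_prefix_next (leqnn _) enq_ts; rewrite ltnn.
Qed.

Lemma run_returns_accepted :
  exists n w, run n = Done (Some (rcons w endc)) /\ real (rcons w endc).
Proof.
have [n [r run_r]] := run_halts.
have := run_on_path n; rewrite run_r => -[w [r_w real_w]].
by exists n, w; rewrite run_r r_w.
Qed.

End Run.
End SolutionPath.
End Decoding.

Local Open Scope ring_scope.

Theorem mainTheorem2
  (Sigma : finType) (AST : Type) (parse : seq Sigma -> option AST)
  (R : realFieldType)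
  (voc : seq (seq Sigma))
  (* every string is a concatenation of tokens *)
  (Hvoc : forall w : seq Sigma,
      exists ts : seq (seq Sigma), all (fun t => t \in voc) ts /\ flatten ts = w)
  (endc : Sigma) (HendT : [:: endc] \in voc)
  (phi : AST -> bool)
  (* every string satisfying the constraint contains END exactly once, last *)
  (Hend : forall w, sem parse phi w ->
      exists w0, w = rcons w0 endc /\ endc \notin w0)
  (lm : seq Sigma -> seq Sigma -> R)
  (Hlm : forall w t, 0 <= lm w t <= 1)
  (realizable : seq Sigma -> (AST -> bool) -> bool)
  (Hover : forall w, (exists w', sem parse phi (w ++ w')) -> realizable w phi)
  (Hcons : forall w0, realizable (rcons w0 endc) phi = sem parse phi (rcons w0 endc))
  (run : nat -> dstate Sigma R) (deq : nat -> option (seq Sigma))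
  (Hinit : run 0%N = Running [:: ([::], 1)])
  (Hstep : forall n, dstep voc endc (fun w => realizable w phi) lm
                        (run n) (deq n) (run n.+1))
  (* fair enumeration: every enqueued string is eventually dequeued
     (unless the algorithm has returned before) *)
  (Hfair : forall n p w, run n = Running p -> w \in map fst p ->
      exists m, (n <= m)%N /\ (deq m = Some w \/ exists res, run m = Done res))
  (Hsol : exists wstar, sem parse phi wstar) :
  exists m w, run m = Done (Some w) /\ sem parse phi w.
Proof.
have [sol sem_sol] := Hsol; have [w0 [sol_def _]] := Hend _ sem_sol.
rewrite {}sol_def in sem_sol.
have [ts [ts_voc flatten_ts]] := Hvoc w0.
have real_prefix k : realizable (flatten (take k ts)) phi.
  apply: Hover; exists (rcons (flatten (drop k ts)) endc).
  by rewrite -rcons_cat -flatten_cat cat_take_drop flatten_ts.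
have real_solution : realizable (rcons (flatten ts) endc) phi.
  by rewrite Hcons flatten_ts.
have [n [w [run_n real_w]]] := run_returns_accepted ts_voc HendT real_prefix
  real_solution Hinit (mem_head _ _) Hstep Hfair.
by exists n, (rcons w endc); rewrite -Hcons.
Qed.
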